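(* Consider CAV $i$ subject to both the rear-end constraint with respect to its physically preceding CAV $i_p$ and the safe-merging constraint with respect to CAV $i-1$ on the other road, as in the context, under (A1) and (SA). Let $t=t_i^0+k\Delta t$. Assume $v_i\ge0$ at all times and $u_{\min}\le0$. Suppose that $b_{\eta_1}(t)\ge0$, $b_{\eta_2}(t)\ge0$, that QP$_{12}(t)$ is feasible, and that the control applied on $[t,t+\Delta t)$ is a feasible point of QP$_{12}(t)$. Then QP$_{12}(t+\Delta t)$ is feasible.
   Context: **Vehicle model.** The vehicle dynamics are $\dot x_i=v_i$ and $\dot v_i=u_i$, where $x_i\in[0,L]$ is the distance travelled by CAV $i$ from its road's origin, $v_i$ its speed and $u_i$ its acceleration (the control). The merging point is at position $L>0$. **Other vehicles.** CAV $i_p$ physically precedes $i$ on the same road, with position $x_{i_p}$, speed $v_{i_p}$ and acceleration $u_{i_p}$. CAV $i-1$ immediately precedes $i$ in first-in-first-out crossing order on the other road, with $x_{i-1}$, $v_{i-1}$ and $u_{i-1}$. All of these quantities are known to CAV $i$. **Constants and control bounds.** Let $z_{i,i_p}=x_{i_p}-x_i$ and $z_{i,i-1}=x_{i-1}-x_i$. The constants are $\varphi>0$, $\delta$, $k_1>0$, $k_2>0$, and $\varphi_2=\varphi/L$. Control bounds are $u_{\min}\le u_i\le u_{i,\max}$ with $u_{\min}<0<u_{i,\max}$. **(A1) Common minimum acceleration.** All CAVs share the minimum acceleration $u_{\min}$, so $u_{i_p}\ge u_{\min}$ and $u_{i-1}\ge u_{\min}$ at all times. **Rear-end functions:** - $b_1=z_{i,i_p}-\varphi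 v_i-\delta$. - $b_{\mathrm{cbf}_1}(u_i)=v_{i_p}-v_i-\varphi u_i+k_1b_1$. - $b_{F,1}=v_{i_p}-v_i+k_1b_1-\varphi u_{\min}$. - $b_{\eta_1}=v_{i_p}-v_i-\varphi u_{\min}$. - $\eta_1(u_i)=u_{i_p}-u_i+k_1b_{\eta_1}$. **Merging functions:** - $b_2=z_{i,i-1}-\varphi_2x_iv_i-\delta$. - $b_{\mathrm{cbf}_2}(u_i)=v_{i-1}-v_i-\varphi_2v_i^2-\varphi_2x_iu_i+k_2b_2$. - $b_{F,2}=v_{i-1}-v_i-\varphi_2v_i^2+k_2b_2-\varphi_2x_iu_{\min}$. - $b_{\eta_2}=v_{i-1}-v_i-\varphi_2v_i^2-\varphi_2x_iu_{\min}$. - $\eta_2(u_i)=u_{i-1}-u_i-2\varphi_2v_iu_i-\varphi_2v_iu_{\min}+k_2b_{\eta_2}$. Note that $\eta_j=\dot b_{\eta_j}+k_jb_{\eta_j}$ and $\dot b_{F,j}+k_jb_{F,j}=\eta_j+k_jb_{\mathrm{cbf}_j}$ for $j=1,2$. **QP$_{12}(t)$.** QP$_{12}(t)$ minimizes $\beta e_i^2+\tfrac12(u_i-u_{\mathrm{ref}}(t))^2$ over $(u_i,e_i)$ subject to: - $b_{\mathrm{cbf}_1}\ge0$ and $b_{\mathrm{cbf}_2}\ge0$, - $u_{\min}\le u_i\le u_{i,\max}$, - $\eta_1\ge0$ and $\eta_2\ge0$, - a control Lyapunov constraint $c_1(t)+c_2(t)u_i\le e_i$ with free slack variable $e_i$.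 All quantities are evaluated at $t$. ''Feasible'' means the constraint set is nonempty. **(SA) Sampling / forward invariance.** The control is held constant on each $[t,t+\Delta t)$, and $\Delta t$ is small enough that for $b\in\{b_1,b_{F,1},b_{\eta_1}\}$ with gain $k=k_1$, and for $b\in\{b_2,b_{F,2},b_{\eta_2}\}$ with gain $k=k_2$: if $b(t)\ge0$ and $\dot b(t)+kb(t)\ge0$ under the applied controls, then $b(t+\Delta t)\ge0$. *)

From Stdlib Require Import Reals Lra.
Open Scope R_scope.

Record Params := mkParams {
  phi : R; delta : R; k1 : R; k2 : R; Lm : R;
  umin : R; uimax : R }.

Definition phi2 (P : Params) : R := phi P / Lm P.

(* Time trajectories (time is real).  [xi vi ui] : CAV i;
   [xp vp up] : physically preceding CAV i_p;
   [xm vm um] : CAV i-1 on the other road;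
   [uref c1 c2] : reference control and CLF coefficients. *)
Record Traj := mkTraj {
  xi : R -> R; vi : R -> R; ui : R -> R;
  xp : R -> R; vp : R -> R; up : R -> R;
  xm : R -> R; vm : R -> R; um : R -> R;
  uref : R -> R; c1 : R -> R; c2 : R -> R }.

Section Fns.
Variables (P : Params) (T : Traj).

Definition b1 s := xp T s - xi T s - phi P * vi T s - delta P.
Definition bcbf1 s u := vp T s - vi T s - phi P * u + k1 P * b1 s.
Definition bF1 s := vp T s - vi T s + k1 P * b1 s - phi P * umin P.
Definition beta1 s := vp T s - vi T s - phi P * umin P.
Definition eta1 s u := up T s - u + k1 P * beta1 s.

Definition b2 s := xm T s - xi T s - phi2 P * xi T s * vi T s - delta P.
Definition bcbf2 s u :=
  vm T s - vi T s - phi2 P * (vi T s)^2 - phi2 P * xi T s * u + k2 P * b2 s.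
Definition bF2 s :=
  vm T s - vi T s - phi2 P * (vi T s)^2 + k2 P * b2 s - phi2 P * xi T s * umin P.
Definition beta2 s :=
  vm T s - vi T s - phi2 P * (vi T s)^2 - phi2 P * xi T s * umin P.
Definition eta2 s u :=
  um T s - u - 2 * phi2 P * vi T s * u - phi2 P * vi T s * umin P + k2 P * beta2 s.

(* Time derivatives along the dynamics  x' = v, v' = u  (for all three
   vehicles), with the controls applied at time s. *)
Definition db1 s := vp T s - vi T s - phi P * ui T s.
Definition dbF1 s := up T s - ui T s + k1 P * db1 s.
Definition dbeta1 s := up T s - ui T s.
Definition db2 s :=
  vm T s - vi T s - phi2 P * vi T s * vi T s - phi2 P * xi T s * ui T s.
Definition dbF2 s :=
  um T s - ui T s - 2 * phi2 P * vi T s * ui T s + k2 P * db2 s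
  - phi2 P * vi T s * umin P.
Definition dbeta2 s :=
  um T s - ui T s - 2 * phi2 P * vi T s * ui T s - phi2 P * vi T s * umin P.

Definition QP12_constraints s u e : Prop :=
  0 <= bcbf1 s u /\ 0 <= bcbf2 s u /\
  umin P <= u <= uimax P /\
  0 <= eta1 s u /\ 0 <= eta2 s u /\
  c1 T s + c2 T s * u <= e.

Definition QP12_feasible s : Prop := exists u e, QP12_constraints s u e.

(* (SA): forward invariance over one sampling period, at every sampling
   instant t0 + k dt, for b in {b1,bF1,beta1} (gain k1) and
   {b2,bF2,beta2} (gain k2). *)
Definition SA_step (k : R) (b db : R -> R) (dt s : R) : Prop :=
  0 <= b s -> 0 <= db s + k * b s -> 0 <= b (s + dt).

Definition Assump_SA (t0 dt : R) : Prop :=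
  forall n : nat, let s := t0 + INR n * dt in
    SA_step (k1 P) b1 db1 dt s /\ SA_step (k1 P) bF1 dbF1 dt s /\
    SA_step (k1 P) beta1 dbeta1 dt s /\
    SA_step (k2 P) b2 db2 dt s /\ SA_step (k2 P) bF2 dbF2 dt s /\
    SA_step (k2 P) beta2 dbeta2 dt s.

Definition Assump_A1 : Prop := forall s, umin P <= up T s /\ umin P <= um T s.

End Fns.

From Pilot Require Import Defs.
From Stdlib Require Import Reals Lra.
Open Scope R_scope.

(* The minimal acceleration [u = umin] is feasible at [t + dt]: there the
   two CBF constraints become [bF1 >= 0] and [bF2 >= 0], and the two
   [eta] constraints follow from [beta1, beta2 >= 0], (A1), [v >= 0] and
   [umin <= 0].  Each of [bF1, bF2, beta1, beta2] satisfies the forward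
   invariance condition of (SA) at [t], because [dbF_j + k_j bF_j] equals
   [eta_j + k_j bcbf_j] and [dbeta_j + k_j beta_j] equals [eta_j], both
   evaluated at the applied (feasible) control. *)

Section QP12.
Variables (P : Params) (T : Traj).

Lemma bF1_bcbf1 s u : bF1 P T s = bcbf1 P T s u + phi P * (u - umin P).
Proof. unfold bF1, bcbf1; ring. Qed.

Lemma bF2_bcbf2 s u :
  bF2 P T s = bcbf2 P T s u + phi2 P * xi T s * (u - umin P).
Proof. unfold bF2, bcbf2; ring. Qed.

Lemma dbF1_eta1 s :
  dbF1 P T s + k1 P * bF1 P T s = eta1 P T s (ui T s) + k1 P * bcbf1 P T s (ui T s).
Proof. unfold dbF1, db1, bF1, eta1, beta1, bcbf1; ring. Qed.

Lemma dbF2_eta2 s :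
  dbF2 P T s + k2 P * bF2 P T s = eta2 P T s (ui T s) + k2 P * bcbf2 P T s (ui T s).
Proof. unfold dbF2, db2, bF2, eta2, beta2, bcbf2; ring. Qed.

Lemma dbeta1_eta1 s : dbeta1 T s + k1 P * beta1 P T s = eta1 P T s (ui T s).
Proof. unfold dbeta1, eta1; ring. Qed.

Lemma dbeta2_eta2 s : dbeta2 P T s + k2 P * beta2 P T s = eta2 P T s (ui T s).
Proof. unfold dbeta2, eta2; ring. Qed.

Lemma bcbf1_umin s : bcbf1 P T s (umin P) = bF1 P T s.
Proof. unfold bcbf1, bF1; ring. Qed.

Lemma bcbf2_umin s : bcbf2 P T s (umin P) = bF2 P T s.
Proof. unfold bcbf2, bF2; ring. Qed.

Lemma eta1_umin s :
  eta1 P T s (umin P) = Defs.up T s - umin P + k1 P * beta1 P T s.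
Proof. unfold eta1; ring. Qed.

Lemma eta2_umin s :
  eta2 P T s (umin P)
  = um T s - umin P + 3 * phi2 P * vi T s * - umin P + k2 P * beta2 P T s.
Proof. unfold eta2; ring. Qed.

Lemma QP12_feasible_umin s :
  0 <= phi2 P -> 0 <= k1 P -> 0 <= k2 P ->
  umin P <= 0 -> umin P <= uimax P ->
  umin P <= Defs.up T s -> umin P <= um T s -> 0 <= vi T s ->
  0 <= bF1 P T s -> 0 <= bF2 P T s -> 0 <= beta1 P T s -> 0 <= beta2 P T s ->
  QP12_feasible P T s.
Proof.
  intros Hphi2 Hk1 Hk2 Humin0 Hbounds Hup Hum Hv HF1 HF2 Hb1 Hb2.
  exists (umin P), (Defs.c1 T s + Defs.c2 T s * umin P).
  unfold QP12_constraints.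
  rewrite bcbf1_umin, bcbf2_umin, eta1_umin, eta2_umin.
  assert (0 <= k1 P * beta1 P T s) by (apply Rmult_le_pos; lra).
  assert (0 <= k2 P * beta2 P T s) by (apply Rmult_le_pos; lra).
  assert (0 <= 3 * phi2 P * vi T s * - umin P)
    by (apply Rmult_le_pos; [apply Rmult_le_pos|]; lra).
  repeat split; lra.
Qed.

Section Invariance.
Variables (dt s e : R).
Hypothesis Happlied : QP12_constraints P T s (ui T s) e.

Lemma bF1_invariant :
  0 <= phi P -> 0 <= k1 P -> SA_step (k1 P) (bF1 P T) (dbF1 P T) dt s ->
  0 <= bF1 P T (s + dt).
Proof.
  destruct Happlied as [Hcbf1 [_ [[Hlo _] [Heta1 _]]]].
  intros Hphi Hk1 HSA; apply HSA.
  - rewrite (bF1_bcbf1 s (ui T s)).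
    assert (0 <= phi P * (ui T s - umin P)) by (apply Rmult_le_pos; lra); lra.
  - rewrite dbF1_eta1.
    assert (0 <= k1 P * bcbf1 P T s (ui T s)) by (apply Rmult_le_pos; lra); lra.
Qed.

Lemma bF2_invariant :
  0 <= phi2 P -> 0 <= k2 P -> 0 <= xi T s ->
  SA_step (k2 P) (bF2 P T) (dbF2 P T) dt s ->
  0 <= bF2 P T (s + dt).
Proof.
  destruct Happlied as [_ [Hcbf2 [[Hlo _] [_ [Heta2 _]]]]].
  intros Hphi2 Hk2 Hx HSA; apply HSA.
  - rewrite (bF2_bcbf2 s (ui T s)).
    assert (0 <= phi2 P * xi T s * (ui T s - umin P))
      by (apply Rmult_le_pos; [apply Rmult_le_pos|]; lra); lra.
  - rewrite dbF2_eta2.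
    assert (0 <= k2 P * bcbf2 P T s (ui T s)) by (apply Rmult_le_pos; lra); lra.
Qed.

Lemma beta1_invariant :
  0 <= beta1 P T s -> SA_step (k1 P) (beta1 P T) (dbeta1 T) dt s ->
  0 <= beta1 P T (s + dt).
Proof.
  destruct Happlied as [_ [_ [_ [Heta1 _]]]].
  intros Hb HSA; apply HSA; [exact Hb|]. rewrite dbeta1_eta1; exact Heta1.
Qed.

Lemma beta2_invariant :
  0 <= beta2 P T s -> SA_step (k2 P) (beta2 P T) (dbeta2 P T) dt s ->
  0 <= beta2 P T (s + dt).
Proof.
  destruct Happlied as [_ [_ [_ [_ [Heta2 _]]]]].
  intros Hb HSA; apply HSA; [exact Hb|]. rewrite dbeta2_eta2; exact Heta2.
Qed.

End Invariance.
End QP12.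

Theorem theorem5 (P : Params) (T : Traj) (t0 dt : R) (n : nat) :
  0 < phi P -> 0 < k1 P -> 0 < k2 P -> 0 < Lm P ->
  umin P < 0 < uimax P -> 0 < dt ->
  (forall s, 0 <= xi T s <= Lm P) ->
  Assump_A1 P T -> Assump_SA P T t0 dt ->
  (forall s, 0 <= vi T s) ->
  umin P <= 0 ->
  let t := t0 + INR n * dt in
  (forall s, t <= s < t + dt -> ui T s = ui T t) ->
  0 <= beta1 P T t -> 0 <= beta2 P T t ->
  QP12_feasible P T t ->
  (exists e, QP12_constraints P T t (ui T t) e) ->
  QP12_feasible P T (t + dt).
Proof.
  intros Hphi Hk1 Hk2 HL Hu _ Hx HA1 HSA Hv Humin t _ Hb1 Hb2 _ [e He].
  destruct (HSA n) as [_ [SF1 [SB1 [_ [SF2 SB2]]]]]; fold t in SF1, SB1, SF2, SB2.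
  assert (Hphi2 : 0 < phi2 P) by (unfold phi2; apply Rdiv_lt_0_compat; lra).
  destruct (HA1 (t + dt)) as [Hup Hum].
  apply QP12_feasible_umin; try lra.
  - apply Hv.
  - apply (bF1_invariant P T dt t e); auto; lra.
  - apply (bF2_invariant P T dt t e); auto; [lra | lra | apply Hx].
  - exact (beta1_invariant P T dt t e He Hb1 SB1).
  - exact (beta2_invariant P T dt t e He Hb2 SB2).
Qed.
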